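(* Let $\hat T^{\downarrow}_k$ be a random ranked plane tree with $k$ leaves produced by a Markov splitting model, let $\hat T_k$ be its underlying plane tree and $T_k$ its underlying (non-plane, unranked) tree. Suppose the model is split-exchangeable (i.e. $\Pr\{\hat T^{\downarrow}_k=\hat t^{\downarrow}_k\}$ is the same for all ranked plane trees with the same underlying plane tree) and plane-invariant (i.e. $\Pr\{\hat T_k=\hat t_k\}$ is the same for all plane trees with the same underlying tree). Then for every tree $t_k$ with $k$ leaves, \[ \Pr\{T_k=t_k\}=B(t_k)\times 2^{k-1-s(t_k)}\times\Pr\{\hat T^{\downarrow}_k=\hat t^{\downarrow}_k\}, \] where $\hat t^{\downarrow}_k$ is any ranked plane tree whose underlying tree is $t_k$, $B(t_k)=(k-1)!/\prod_{u\in\breve V(t_k)}\lfloor t_k(u)\rfloor$ ($\breve V(t_k)$ the internal nodes, $\lfloor t_k(u)\rfloor$ the number of internal nodes of the subtree rooted at $u$), and $s(t_k)$ is the number of internal nodes of $t_k$ whose two child subtrees are isomorphic.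
   Context: All trees are finite, rooted, binary. A plane tree has the two children of each internal node ordered left/right; forgetting this order gives a (non-plane) tree, up to rooted isomorphism. An internal ranking labels the $k-1$ internal nodes bijectively by $\{1,\dots,k-1\}$ with root rank $1$ and ranks increasing along paths away from the root; a ranked plane tree is a plane tree with an internal ranking. A splitting process starts from a single root leaf and, at step $i=1,\dots,k-1$, chooses one current leaf at random, gives it rank $i$ and attaches a new left leaf and a new right leaf; the result is a random ranked plane tree with $k$ leaves. Equivalently, encoding plane trees by dyadic partitions of $[0,1]$ obtained by recursive midpoint bisection, the process is a sequence of interval bisections. It is a Markov splitting model if the conditional probability of which leaf is split next depends on the history only through the current (unranked) plane tree, i.e. the current partition. *)

From HB Require Import structures.
From mathcomp Require Import all_boot all_order all_algebra.
Set Implicit Arguments. Unset Strict Implicit. Unset Printing Implicit Defensive.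
Import Order.TTheory GRing.Theory Num.Theory.

Inductive ptree := Leaf | Node of ptree & ptree.

Fixpoint ptree_eqb (a b : ptree) : bool :=
  match a, b with
  | Leaf, Leaf => true
  | Node a1 a2, Node b1 b2 => ptree_eqb a1 b1 && ptree_eqb a2 b2
  | _, _ => false
  end.

Lemma ptree_eqP : Equality.axiom ptree_eqb.
Proof.
elim=> [|a1 IH1 a2 IH2] [|b1 b2] /=; try by constructor.
case: (IH1 b1) => [->|h]; last by constructor; case.
case: (IH2 b2) => [->|h]; last by constructor; case.
by constructor.
Qed.
HB.instance Definition _ := hasDecEq.Build ptree ptree_eqP.

Fixpoint nleaves (t : ptree) : nat :=
  match t with Leaf => 1 | Node l r => nleaves l + nleaves r end.

Fixpoint ninternal (t : ptree) : nat :=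
  match t with Leaf => 0 | Node l r => (ninternal l + ninternal r).+1 end.

(* rooted isomorphism of binary trees (forgetting left/right order):
   two plane trees have the same underlying (non-plane) tree iff [tree_iso] *)
Fixpoint tree_iso (a b : ptree) : bool :=
  match a, b with
  | Leaf, Leaf => true
  | Node a1 a2, Node b1 b2 => (tree_iso a1 b1 && tree_iso a2 b2) || (tree_iso a1 b2 && tree_iso a2 b1)
  | _, _ => false
  end.

Fixpoint prod_internal (t : ptree) : nat :=
  match t with
  | Leaf => 1
  | Node l r => ninternal t * prod_internal l * prod_internal r
  end.

Fixpoint nsym (t : ptree) : nat :=
  match t with
  | Leaf => 0
  | Node l r => (tree_iso l r : nat) + nsym l + nsym r
  end.

Definition Bcoef (R : fieldType) (t : ptree) : R :=
  ((nleaves t).-1 `!)%N%:R / (prod_internal t)%:R.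

(* internal nodes carry their rank *)
Inductive rtree := RLeaf | RNode of nat & rtree & rtree.

Fixpoint rtree_eqb (a b : rtree) : bool :=
  match a, b with
  | RLeaf, RLeaf => true
  | RNode x a1 a2, RNode y b1 b2 => (x == y) && rtree_eqb a1 b1 && rtree_eqb a2 b2
  | _, _ => false
  end.

Lemma rtree_eqP : Equality.axiom rtree_eqb.
Proof.
elim=> [|x a1 IH1 a2 IH2] [|y b1 b2] /=; try by constructor.
case: (x =P y) => [->|h]; last by constructor; case.
case: (IH1 b1) => [->|h]; last by constructor; case.
case: (IH2 b2) => [->|h]; last by constructor; case.
by constructor.
Qed.
HB.instance Definition _ := hasDecEq.Build rtree rtree_eqP.

Fixpoint plane_of (t : rtree) : ptree :=
  match t with RLeaf => Leaf | RNode _ l r => Node (plane_of l) (plane_of r) end.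

Fixpoint ranks (t : rtree) : seq nat :=
  match t with RLeaf => [::] | RNode x l r => x :: ranks l ++ ranks r end.

Definition rank_below (x : nat) (t : rtree) : bool :=
  match t with RLeaf => true | RNode y _ _ => x < y end.

Fixpoint increasing (t : rtree) : bool :=
  match t with
  | RLeaf => true
  | RNode x l r => [&& rank_below x l, rank_below x r, increasing l & increasing r]
  end.

Definition root_rank_one (t : rtree) : bool :=
  match t with RLeaf => true | RNode x _ _ => x == 1 end.

Definition is_ranked (k : nat) (t : rtree) : bool :=
  [&& nleaves (plane_of t) == k, perm_eq (ranks t) (iota 1 k.-1),
      root_rank_one t & increasing t].

(* split the i-th leaf (leaves numbered 0,1,... from left to right),
   giving the new internal node rank r *)
Fixpoint rsplit (t : rtree) (i r : nat) : rtree :=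
  match t with
  | RLeaf => if i == 0 then RNode r RLeaf RLeaf else RLeaf
  | RNode x l rr =>
      if i < nleaves (plane_of l) then RNode x (rsplit l i r) rr
      else RNode x l (rsplit rr (i - nleaves (plane_of l)) r)
  end.

(* all histories of n steps: at step j (j = 1..n) a leaf index < j is chosen
   (the current tree has j leaves) *)
Fixpoint histories (n : nat) : seq (seq nat) :=
  match n with
  | 0 => [:: [::]]
  | n'.+1 => [seq rcons h i | h <- histories n', i <- iota 0 n'.+1]
  end.

Fixpoint build_from (t : rtree) (j : nat) (h : seq nat) : rtree :=
  match h with
  | [::] => t
  | i :: h' => build_from (rsplit t i j) j.+1 h'
  end.

Definition build (h : seq nat) : rtree := build_from RLeaf 1 h.

Local Open Scope ring_scope.
Section Model.
Variable R : numFieldType.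
(* A Markov splitting model: p t i = probability of splitting leaf i
   (left-to-right index) when the current plane tree is t. *)
Variable p : ptree -> nat -> R.

Fixpoint weight_from (t : rtree) (j : nat) (h : seq nat) : R :=
  match h with
  | [::] => 1
  | i :: h' => p (plane_of t) i * weight_from (rsplit t i j) j.+1 h'
  end.

Definition weight (h : seq nat) : R := weight_from RLeaf 1 h.

Definition prob_ranked (k : nat) (rt : rtree) : R :=
  \sum_(h <- histories k.-1 | build h == rt) weight h.

Definition prob_plane (k : nat) (t : ptree) : R :=
  \sum_(h <- histories k.-1 | plane_of (build h) == t) weight h.

Definition prob_tree (k : nat) (t : ptree) : R :=
  \sum_(h <- histories k.-1 | tree_iso (plane_of (build h)) t) weight h.
End Model.

Definition markov_splitting_model (R : numFieldType) (p : ptree -> nat -> R) : Prop :=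
  (forall t i, 0 <= p t i) /\
  (forall t, \sum_(i < nleaves t) p t i = 1).

(* A tree t with k leaves has 2^(k-1-s(t)) plane representatives (one left/right
   choice at each internal node whose children are not isomorphic), so plane
   invariance gives Pr{T_k = t} = 2^(k-1-s(t)) Pr{plane tree = x} for any fixed
   representative x.  Distinct splitting histories produce distinct ranked plane
   trees, so Pr{plane tree = x} sums the probabilities of the ranked trees of shape
   x, which split-exchangeability makes all equal.  Their number is the number of
   histories building x, and since a history of a tree is a shuffle of histories
   of its two subtrees, it satisfies the hook-length formula
   (k-1)! / prod_u floor(x(u)) = B(x) = B(t). *)

From HB Require Import structures.
From mathcomp Require Import all_boot all_order all_algebra zify ring.
Import Order.TTheory GRing.Theory Num.Theory.

Set Implicit Arguments.
Unset Strict Implicit.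
Unset Printing Implicit Defensive.

Fixpoint psplit (t : ptree) (i : nat) : ptree :=
  match t with
  | Leaf => if i == 0 then Node Leaf Leaf else Leaf
  | Node l r => if i < nleaves l then Node (psplit l i) r
                else Node l (psplit r (i - nleaves l))
  end.

Fixpoint pbuild (t : ptree) (h : seq nat) : ptree :=
  if h is i :: h' then pbuild (psplit t i) h' else t.

Lemma nleaves_ninternal t : nleaves t = (ninternal t).+1.
Proof. by elim: t => //= l -> r ->; rewrite addSn addnS. Qed.

Lemma ninternal_psplit t i : i < nleaves t -> ninternal (psplit t i) = (ninternal t).+1.
Proof.
elim: t i => [|l IHl r IHr] i /=; first by case: i.
case: ifP => hi /=; first by rewrite IHl // addSn.
by move=> H; rewrite IHr ?addnS //; lia.
Qed.

Lemma nleaves_psplit t i : i < nleaves t -> nleaves (psplit t i) = (nleaves t).+1.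
Proof. by move=> hi; rewrite !nleaves_ninternal ninternal_psplit. Qed.

Fixpoint nhist (m : nat) (s t : ptree) : nat :=
  if m is m'.+1 then \sum_(i < nleaves s) nhist m' (psplit s i) t else s == t.

Lemma nhistS m s t : nhist m.+1 s t = \sum_(i < nleaves s) nhist m (psplit s i) t.
Proof. by []. Qed.

Lemma nhist_eq0 m s t : ninternal t != ninternal s + m -> nhist m s t = 0.
Proof.
elim: m s => [|m IH] s /=.
  by rewrite addn0 => hne; apply/eqP; rewrite eqb0; apply: contra hne => /eqP ->.
move=> hne; apply: big1 => i _; apply: IH.
by rewrite ninternal_psplit // addSnnS.
Qed.

Lemma binomial_convolutionS m (X Y : nat -> nat) :
  \sum_(a < m.+1) 'C(m, a) * X a.+1 * Y (m - a) +
  \sum_(a < m.+1) 'C(m, a) * X a * Y (m - a).+1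
  = \sum_(a < m.+2) 'C(m.+1, a) * X a * Y (m.+1 - a).
Proof.
rewrite [in RHS]big_ord_recl /= bin0 !mul1n subn0.
under [in RHS]eq_bigr do rewrite binS mulnDl mulnDl.
rewrite big_split /= addnA [in RHS]addnC; congr (_ + _).
rewrite big_ord_recl /= bin0 mul1n subn0 [in RHS]big_ord_recr /= bin_small //.
rewrite !mul0n addn0; congr (_ + _).
by apply: eq_bigr => a _; rewrite /bump /= add1n subSS -subSn ?subSS.
Qed.

(* A history of [Node sl sr] interleaves a history of [sl] with one of [sr]. *)
Lemma nhist_Node m sl sr tl tr :
  nhist m (Node sl sr) (Node tl tr) =
  \sum_(a < m.+1) 'C(m, a) * nhist a sl tl * nhist (m - a) sr tr.
Proof.
elim: m sl sr => [|m IH] sl sr.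
  rewrite big_ord1 bin0 mul1n /= -[Node sl sr == _]/((sl == tl) && (sr == tr)).
  by case: (sl == tl); case: (sr == tr).
rewrite nhistS [nleaves _]/= big_split_ord [LHS]/=.
under eq_bigr do rewrite ltn_ord IH.
under [X in _ + X]eq_bigr do rewrite ltnNge leq_addr addKn IH.
rewrite -(binomial_convolutionS m (fun a => nhist a sl tl) (fun b => nhist b sr tr)).
congr (_ + _); rewrite exchange_big; apply: eq_bigr => a _ /=.
  by rewrite big_distrr big_distrl.
by rewrite big_distrr.
Qed.

Lemma nhist_Leaf t : nhist (ninternal t) Leaf t * prod_internal t = (ninternal t)`!.
Proof.
elim: t => [|l IHl r IHr] //=.
rewrite big_ord1 nhist_Node.
set x := ninternal l + ninternal r.
have hl : ninternal l < x.+1 by rewrite ltnS leq_addr.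
rewrite (bigD1 (Ordinal hl)) //= big1 ?addn0; last first.
  move=> a ha; rewrite nhist_eq0 ?mul0n ?muln0 //=.
  by apply: contra ha => /eqP e; apply/eqP/val_inj => /=; lia.
have -> : x - ninternal l = ninternal r by rewrite /x addKn.
rewrite factS -(@bin_fact x (ninternal l)) ?leq_addr // /x addKn -IHl -IHr.
ring.
Qed.

Lemma psplit_inj t i1 i2 : i1 < nleaves t -> i2 < nleaves t ->
  psplit t i1 = psplit t i2 -> i1 = i2.
Proof.
have psplit_neq s i : i < nleaves s -> psplit s i <> s.
  by move=> hi /(congr1 ninternal); rewrite ninternal_psplit //; lia.
elim: t i1 i2 => [|l IHl r IHr] i1 i2 /=; first by case: i1; case: i2.
move=> h1 h2; case: ifP => a1; case: ifP => a2 [].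
- exact: IHl.
- by move=> E; case: (psplit_neq _ _ a1 E).
- by move=> E; case: (psplit_neq _ _ a2 (esym E)).
- by move=> /IHr; lia.
Qed.

Fixpoint valid_hist (a : nat) (h : seq nat) : bool :=
  if h is i :: h' then (i < a) && valid_hist a.+1 h' else true.

(* Unlike [histories], which appends each step with [rcons], [hists] prepends
   the first step; this matches the recursion of [nhist]. *)
Fixpoint hists (a m : nat) : seq (seq nat) :=
  if m is m'.+1 then [seq i :: h | i <- iota 0 a, h <- hists a.+1 m'] else [:: [::]].

Lemma mem_hists a m h : (h \in hists a m) = (size h == m) && valid_hist a h.
Proof.
elim: m a h => [|m IH] a [|i h] //=.
  by apply/negbTE/allpairsP => -[[x y] [_ _]].
apply/allpairsP/and3P => [[[x y] [/= hx hy [-> ->]]]|[/eqP[hs] hi hv]].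
  by move: hx hy; rewrite mem_iota IH => /andP[_ ->] /andP[/eqP -> ->].
by exists (i, h); rewrite /= mem_iota IH hs hi hv eqxx.
Qed.

Lemma uniq_hists a m : uniq (hists a m).
Proof.
elim: m a => [|m IH] a //=.
apply: allpairs_uniq => //; first exact: iota_uniq.
by move=> [x1 y1] [x2 y2] _ _ /= [-> ->].
Qed.

Lemma ninternal_pbuild s h : valid_hist (nleaves s) h ->
  ninternal (pbuild s h) = ninternal s + size h.
Proof.
elim: h s => [|i h IH] s /=; first by rewrite addn0.
by case/andP=> hi hv; rewrite IH ?nleaves_psplit // ninternal_psplit // addSnnS.
Qed.

Lemma count_hists m s t :
  count (fun h => pbuild s h == t) (hists (nleaves s) m) = nhist m s t.
Proof.
elim: m s => [|m IH] s /=; first by rewrite addn0.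
rewrite count_flatten sumnE !big_map -{1}(subn0 (nleaves s)) big_mkord.
by apply: eq_bigr => i _; rewrite count_map -(nleaves_psplit (ltn_ord i)) -IH.
Qed.

Lemma valid_hist_rcons a h i :
  valid_hist a (rcons h i) = valid_hist a h && (i < a + size h).
Proof.
elim: h a => [|x h IH] a /=; first by rewrite addn0 andbT.
by rewrite IH addSnnS andbA.
Qed.

Lemma historiesS n :
  histories n.+1 = [seq rcons h i | h <- histories n, i <- iota 0 n.+1].
Proof. by []. Qed.

Lemma mem_histories n h : (h \in histories n) = (size h == n) && valid_hist 1 h.
Proof.
elim: n h => [|n IH] h; first by case: h.
rewrite historiesS; apply/allpairsP/andP => [[[h' i] [hh' hi ->]]|].
  move: hh' hi; rewrite IH mem_iota size_rcons valid_hist_rcons.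
  by case/andP => /eqP -> ->; rewrite add1n.
case/lastP: h => [|h i]; first by case.
rewrite size_rcons valid_hist_rcons => -[/eqP[hs] /andP[hv hi]].
exists (h, i); split=> //; first by rewrite IH hs hv eqxx.
by rewrite mem_iota add0n -hs -add1n.
Qed.

Lemma uniq_histories n : uniq (histories n).
Proof.
elim: n => [|n IH] //; rewrite historiesS; apply: allpairs_uniq => //; first exact: iota_uniq.
move=> [h1 i1] [h2 i2] _ _ /= /eqP.
by rewrite eqseq_rcons => /andP[/eqP -> /eqP ->].
Qed.

Lemma perm_histories n : perm_eq (histories n) (hists 1 n).
Proof.
apply: uniq_perm; [exact: uniq_histories | exact: uniq_hists |].
by move=> h; rewrite mem_histories mem_hists.
Qed.

Lemma plane_of_rsplit t i j : plane_of (rsplit t i j) = psplit (plane_of t) i.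
Proof.
elim: t i => [|x l IHl r IHr] i /=; first by case: (i == 0).
by case: ifP => _ /=; rewrite ?IHl ?IHr.
Qed.

Lemma plane_of_build_from t j h : plane_of (build_from t j h) = pbuild (plane_of t) h.
Proof. by elim: h t j => [|i h IH] t j //=; rewrite IH plane_of_rsplit. Qed.

Lemma ranks_rsplit t i j : i < nleaves (plane_of t) ->
  perm_eq (ranks (rsplit t i j)) (j :: ranks t).
Proof.
elim: t i => [|x l IHl r IHr] i /=; first by case: i.
case: ifP => hi H /=.
  by apply/permP => a /=; rewrite !count_cat (permP (IHl _ hi) a) /=; lia.
have hi' : i - nleaves (plane_of l) < nleaves (plane_of r) by lia.
by apply/permP => a /=; rewrite !count_cat (permP (IHr _ hi') a) /=; lia.
Qed.

Lemma nleaves_rsplit t i j : i < nleaves (plane_of t) ->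
  nleaves (plane_of (rsplit t i j)) = (nleaves (plane_of t)).+1.
Proof. by move=> hi; rewrite plane_of_rsplit nleaves_psplit. Qed.

Lemma ranks_build_from t j h : valid_hist (nleaves (plane_of t)) h ->
  perm_eq (ranks (build_from t j h)) (ranks t ++ iota j (size h)).
Proof.
elim: h t j => [|i h IH] t j /=; first by rewrite cats0.
case/andP=> hi hv; have := IH (rsplit t i j) j.+1; rewrite nleaves_rsplit // => /(_ hv) H.
apply: (perm_trans H); rewrite perm_sym -cat1s perm_catCA cat1s -cat_cons.
by rewrite perm_cat2r perm_sym ranks_rsplit.
Qed.

Lemma increasing_rsplit t i j : increasing t -> all (fun y => y < j) (ranks t) ->
  increasing (rsplit t i j).
Proof.
have below_rsplit x s k : rank_below x s -> x < j -> rank_below x (rsplit s k j).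
  by case: s => [|y l r] /= h1 h2; [case: (k == 0) | case: ifP].
elim: t i => [|x l IHl r IHr] i /=; first by case: (i == 0).
case/and4P=> bl br il ir; rewrite all_cat => /andP[hx /andP[al ar]].
by case: ifP => _ /=; rewrite ?bl ?br ?il ?ir ?below_rsplit ?IHl ?IHr.
Qed.

Lemma all_ranks_rsplit t i j k : i < nleaves (plane_of t) ->
  all (fun y => y < k) (ranks (rsplit t i j)) = (j < k) && all (fun y => y < k) (ranks t).
Proof. by move=> hi; rewrite (perm_all _ (ranks_rsplit j hi)). Qed.

Lemma increasing_build_from t j h : increasing t -> all (fun y => y < j) (ranks t) ->
  valid_hist (nleaves (plane_of t)) h -> increasing (build_from t j h).
Proof.
elim: h t j => [|i h IH] t j //= it hat /andP[hi hv].
apply: IH; rewrite ?increasing_rsplit ?all_ranks_rsplit ?nleaves_rsplit ?ltnSn //=.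
by apply: sub_all hat => y /ltnW.
Qed.

Lemma root_rank_one_build_from l r j h : root_rank_one (build_from (RNode 1 l r) j h).
Proof. by elim: h l r j => [|i h IH] l r j //=; case: ifP. Qed.

Lemma is_ranked_build n h : h \in histories n -> is_ranked n.+1 (build h).
Proof.
rewrite mem_histories => /andP[/eqP hs hv]; apply/and4P; split.
- by rewrite /build plane_of_build_from nleaves_ninternal ninternal_pbuild // hs.
- by have := @ranks_build_from RLeaf 1 h hv; rewrite /= hs.
- case: h hs hv => [|i h] // _ /andP[]; rewrite ltnS leqn0 => /eqP -> _.
  exact: root_rank_one_build_from.
- exact: increasing_build_from.
Qed.

(* Removing the nodes of rank [> r] recovers the tree before step [r + 1];
   this is what makes [build] injective. *)
Fixpoint trim (r : nat) (t : rtree) : rtree :=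
  if t is RNode x l rr then (if x <= r then RNode x (trim r l) (trim r rr) else RLeaf)
  else RLeaf.

Lemma trim_rsplit r t i j : r < j -> trim r (rsplit t i j) = trim r t.
Proof.
move=> hr; elim: t i => [|x l IHl rr IHr] i /=.
  by case: (i == 0) => //=; rewrite leqNgt hr.
by case: ifP => _ /=; case: ifP => // _; rewrite ?IHl ?IHr.
Qed.

Lemma trim_build_from r t j h : r < j -> trim r (build_from t j h) = trim r t.
Proof. by elim: h t j => [|i h IH] t j //= hr; rewrite IH ?trim_rsplit // ltnW. Qed.

Lemma trim_id r t : all (fun y => y <= r) (ranks t) -> trim r t = t.
Proof.
elim: t => [|x l IHl rr IHr] //=; rewrite all_cat => /andP[-> /andP[al ar]].
by rewrite IHl ?IHr.
Qed.

Lemma build_from_inj t j h1 h2 : all (fun y => y < j) (ranks t) ->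
  valid_hist (nleaves (plane_of t)) h1 -> valid_hist (nleaves (plane_of t)) h2 ->
  size h1 = size h2 -> build_from t j h1 = build_from t j h2 -> h1 = h2.
Proof.
elim: h1 t j h2 => [|i1 h1 IH] t j [|i2 h2] //= hat /andP[hi1 hv1] /andP[hi2 hv2] [hs] E.
have trim_split i : i < nleaves (plane_of t) -> trim j (rsplit t i j) = rsplit t i j.
  move=> hi; apply: trim_id; rewrite (perm_all _ (ranks_rsplit j hi)) /= leqnn.
  by apply: sub_all hat => y /ltnW.
have E1 : rsplit t i1 j = rsplit t i2 j.
  by have := congr1 (trim j) E; rewrite !trim_build_from // !trim_split.
have ei : i1 = i2 by apply: (psplit_inj hi1 hi2); rewrite -!(plane_of_rsplit _ _ j) E1.
subst i2; congr (_ :: _); apply: (IH (rsplit t i1 j) j.+1) => //.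
- by rewrite all_ranks_rsplit // ltnSn; apply: sub_all hat => y /ltnW.
- by rewrite nleaves_rsplit.
- by rewrite nleaves_rsplit.
Qed.

Lemma build_inj n : {in histories n &, injective build}.
Proof.
move=> h1 h2; rewrite !mem_histories => /andP[/eqP s1 v1] /andP[/eqP s2 v2].
by apply: build_from_inj => //; rewrite s1 s2.
Qed.

Lemma tree_iso_sym a b : tree_iso a b = tree_iso b a.
Proof.
elim: a b => [|a1 IH1 a2 IH2] [|b1 b2] //=.
by rewrite IH1 IH2 IH1 IH2 [tree_iso b2 a1 && _]andbC.
Qed.

Lemma tree_iso_trans b a c : tree_iso a b -> tree_iso b c -> tree_iso a c.
Proof.
elim: a b c => [|a1 IH1 a2 IH2] [|b1 b2] [|c1 c2] //=.
case/orP=> /andP[h1 h2] /orP[] /andP[g1 g2].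
- by rewrite (IH1 _ _ h1 g1) (IH2 _ _ h2 g2).
- by rewrite (IH1 _ _ h1 g1) (IH2 _ _ h2 g2) orbT.
- by rewrite (IH1 _ _ h1 g2) (IH2 _ _ h2 g1) orbT.
- by rewrite (IH1 _ _ h1 g2) (IH2 _ _ h2 g1).
Qed.

Lemma ninternal_iso a b : tree_iso a b -> ninternal a = ninternal b.
Proof.
elim: a b => [|a1 IH1 a2 IH2] [|b1 b2] //=.
by case/orP=> /andP[/IH1 -> /IH2 ->] //; rewrite addnC.
Qed.

Lemma nleaves_iso a b : tree_iso a b -> nleaves a = nleaves b.
Proof. by rewrite !nleaves_ninternal => /ninternal_iso ->. Qed.

Lemma prod_internal_iso a b : tree_iso a b -> prod_internal a = prod_internal b.
Proof.
elim: a b => [|a1 IH1 a2 IH2] [|b1 b2] //=.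
case/orP=> /andP[h1 h2]; rewrite (IH1 _ h1) (IH2 _ h2) (ninternal_iso h1) (ninternal_iso h2) //.
by rewrite [ninternal b2 + _]addnC mulnAC.
Qed.

Lemma nsym_le_ninternal t : nsym t <= ninternal t.
Proof. by elim: t => //= l hl r hr; case: (tree_iso l r) => /=; lia. Qed.

Fixpoint plane_reps (t : ptree) : seq ptree :=
  match t with
  | Leaf => [:: Leaf]
  | Node l r => [seq Node a b | a <- plane_reps l, b <- plane_reps r] ++
      (if tree_iso l r then [::] else [seq Node a b | a <- plane_reps r, b <- plane_reps l])
  end.

Lemma mem_allpairs_Node (s1 s2 : seq ptree) x :
  (x \in [seq Node a b | a <- s1, b <- s2]) =
  if x is Node a b then (a \in s1) && (b \in s2) else false.
Proof.
apply/allpairsP/idP => [[[a b] [/= ha hb ->]]|]; first by rewrite ha hb.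
by case: x => // a b /andP[ha hb]; exists (a, b).
Qed.

Lemma uniq_allpairs_Node (s1 s2 : seq ptree) : uniq s1 -> uniq s2 ->
  uniq [seq Node a b | a <- s1, b <- s2].
Proof. by move=> u1 u2; apply: allpairs_uniq => // -[a1 b1] [a2 b2] _ _ /= [-> ->]. Qed.

Lemma mem_plane_reps t x : (x \in plane_reps t) = tree_iso x t.
Proof.
elim: t x => [|l IHl r IHr] [|a b] //=; rewrite mem_cat !mem_allpairs_Node.
  by case: ifP; rewrite ?mem_allpairs_Node.
rewrite IHl IHr; case: ifP => hlr; last by rewrite mem_allpairs_Node IHl IHr.
rewrite in_nil orbF; apply/idP/idP => [-> //|/orP[//|/andP[h1 h2]]].
have hrl : tree_iso r l by rewrite tree_iso_sym.
by rewrite (tree_iso_trans h1 hrl) (tree_iso_trans h2 hlr).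
Qed.

Lemma uniq_plane_reps t : uniq (plane_reps t).
Proof.
elim: t => //= l IHl r IHr; rewrite cat_uniq uniq_allpairs_Node //=.
case: ifP => hlr //=; rewrite uniq_allpairs_Node // andbT.
apply/hasPn => -[|a b]; rewrite !mem_allpairs_Node // => /andP[ha _].
apply/negP => /andP[ha' _]; move: ha ha'; rewrite !mem_plane_reps => h1 h2.
by rewrite tree_iso_sym in h2; rewrite (tree_iso_trans h2 h1) in hlr.
Qed.

Lemma size_plane_reps t : size (plane_reps t) = 2 ^ (ninternal t - nsym t).
Proof.
elim: t => //= l IHl r IHr.
have hl := nsym_le_ninternal l; have hr := nsym_le_ninternal r.
rewrite size_cat !size_allpairs IHl IHr; case: ifP => _ /=.
  by rewrite addn0 -expnD; congr (2 ^ _); lia.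
by rewrite size_allpairs IHl IHr mulnC addnn -muln2 -expnD -expnSr; congr (2 ^ _); lia.
Qed.

Lemma count_plane_build n x :
  count (fun h => plane_of (build h) == x) (histories n) = nhist n Leaf x.
Proof.
rewrite (permP (perm_histories n)) -count_hists.
by apply: eq_count => h; rewrite /build plane_of_build_from.
Qed.

Local Open Scope ring_scope.

Lemma Bcoef_nhist (R : numFieldType) t : Bcoef R t = (nhist (ninternal t) Leaf t)%:R.
Proof.
rewrite /Bcoef nleaves_ninternal -nhist_Leaf natrM mulfK // pnatr_eq0 -lt0n.
by elim: t => //= l hl r hr; rewrite !muln_gt0 hl hr.
Qed.

Lemma Bcoef_iso (R : fieldType) a b : tree_iso a b -> Bcoef R a = Bcoef R b.
Proof. by move=> hab; rewrite /Bcoef (nleaves_iso hab) (prod_internal_iso hab). Qed.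

Section Probabilities.
Variables (R : numFieldType) (p : ptree -> nat -> R).

Lemma prob_ranked_build n h : h \in histories n -> prob_ranked p n.+1 (build h) = weight p h.
Proof.
move=> hh; rewrite /prob_ranked -big_filter (@eq_in_filter _ _ (pred1 h)).
  by rewrite filter_pred1_uniq ?uniq_histories // big_seq1.
by move=> h' hh'; apply/eqP/eqP => [/(build_inj hh' hh)|->].
Qed.

Lemma prob_tree_plane_reps k t :
  prob_tree p k t = \sum_(t' <- plane_reps t) prob_plane p k t'.
Proof.
rewrite /prob_plane; under [RHS]eq_bigr do rewrite big_mkcond.
rewrite exchange_big /prob_tree big_mkcond; apply: eq_bigr => h _.
rewrite -big_mkcond big_const_seq iter_addr_0 /= -mem_plane_reps.
rewrite (eq_count (a2 := pred1 (plane_of (build h)))) => [|t'] /=; last exact: eq_sym.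
by rewrite count_uniq_mem ?uniq_plane_reps //; case: ifP.
Qed.

Lemma prob_plane_const n x c :
  {in histories n, forall h, plane_of (build h) = x -> prob_ranked p n.+1 (build h) = c} ->
  prob_plane p n.+1 x = (nhist n Leaf x)%:R * c.
Proof.
move=> hc; rewrite /prob_plane big_seq_cond.
rewrite (eq_bigr (fun=> c)) => [|h /andP[hh /eqP hx]]; last by rewrite -(prob_ranked_build hh) hc.
by rewrite -big_seq_cond big_const_seq iter_addr_0 count_plane_build mulr_natl.
Qed.

End Probabilities.

Theorem theorem4p2 (R : numFieldType) (p : ptree -> nat -> R) (k : nat)
  (hmodel : markov_splitting_model p)
  (hsplit_exch : forall rt1 rt2 : rtree, is_ranked k rt1 -> is_ranked k rt2 ->
       plane_of rt1 = plane_of rt2 -> prob_ranked p k rt1 = prob_ranked p k rt2)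
  (hplane_inv : forall t1 t2 : ptree, nleaves t1 = k -> nleaves t2 = k ->
       tree_iso t1 t2 -> prob_plane p k t1 = prob_plane p k t2) :
  forall (t : ptree) (rt : rtree),
    nleaves t = k -> is_ranked k rt -> tree_iso (plane_of rt) t ->
    prob_tree p k t =
      Bcoef R t * (2 ^ (k.-1 - nsym t))%:R * prob_ranked p k rt.
Proof.
move=> t rt ht hrt hiso; set x := plane_of rt in hiso *.
have hx : nleaves x = k by rewrite (nleaves_iso hiso) ht.
have plane_prob : {in plane_reps t, forall t', prob_plane p k t' = prob_plane p k x}.
  move=> t'; rewrite mem_plane_reps => ht'.
  have htx : tree_iso t x by rewrite tree_iso_sym.
  by apply: hplane_inv (tree_iso_trans ht' htx) => //; rewrite (nleaves_iso ht').
rewrite prob_tree_plane_reps (eq_big_seq _ plane_prob) big_const_seq iter_addr_0.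
rewrite count_predT size_plane_reps -(ninternal_iso hiso) -(Bcoef_iso _ hiso).
case: k => [|n] in hsplit_exch hplane_inv ht hx hrt plane_prob *.
  by rewrite nleaves_ninternal in hx.
have nx : ninternal x = n by move: hx; rewrite nleaves_ninternal => -[].
rewrite Bcoef_nhist nx (@prob_plane_const _ _ n x (prob_ranked p n.+1 rt)).
  by rewrite succnK mulrAC mulr_natr.
by move=> h hh hhx; apply: hsplit_exch => //; apply: is_ranked_build.
Qed.
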